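(* Let $\mathcal S$ be a set of density matrices on finite-dimensional Hilbert spaces that is closed under tensor products and under permutations of tensor factors, and let $f$ be a real-valued function on pairs $(\rho,\sigma)$ with $\sigma\in\mathcal S$ and $\rho$ a density matrix on $\mathcal H_\sigma$, which is locally monotonic with respect to $\mathcal S$. Then $f'(\rho,\sigma):=f(\rho,\sigma)-f(\sigma,\sigma)$ is super-additive: for all $\sigma_1,\sigma_2\in\mathcal S$ and every density matrix $\rho_{12}$ on $\mathcal H_{\sigma_1}\otimes\mathcal H_{\sigma_2}$ with marginals $\rho_1,\rho_2$, $$f'(\rho_{12},\sigma_1\otimes\sigma_2)\ge f'(\rho_1,\sigma_1)+f'(\rho_2,\sigma_2).$$
   Context: For $\sigma\in\mathcal S$, $\mathcal H_\sigma$ is the Hilbert space on which $\sigma$ acts and $\mathcal C_\sigma$ is the set of quantum channels $C$ on $\mathcal H_\sigma$ with $C[\sigma]=\sigma$. Closure under permutations means $\sigma\otimes\sigma'\in\mathcal S\Rightarrow\sigma'\otimes\sigma\in\mathcal S$. $f$ is locally monotonic with respect to $\mathcal S$ if for all $\sigma_1,\sigma_2\in\mathcal S$, all $C\in\mathcal C_{\sigma_1\otimes\sigma_2}$ and all density matrices $\rho_i$ on $\mathcal H_{\sigma_i}$: $f(\rho_1,\sigma_1)+f(\rho_2,\sigma_2)\ge f(\rho'_1,\sigma_1)+f(\rho'_2,\sigma_2)$, where $\rho'_1=\mathrm{Tr}_2[C(\rho_1\otimes\rho_2)]$, $\rho'_2=\mathrm{Tr}_1[C(\rho_1\otimes\rho_2)]$.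 *)

From HB Require Import structures.
From mathcomp Require Import all_boot all_order all_algebra.
From mathcomp Require Import complex mxtens.
Set Implicit Arguments. Unset Strict Implicit. Unset Printing Implicit Defensive.
Import Order.TTheory GRing.Theory Num.Theory.
Local Open Scope ring_scope.

Section Quantum.
Variable R : rcfType.
Local Notation C := (R[i]).

Definition adjmx {m n} (A : 'M[C]_(m, n)) : 'M[C]_(n, m) :=
  \matrix_(i, j) (A j i)^*.

Definition hermitian {n} (A : 'M[C]_n) : Prop := adjmx A = A.

Definition psd {n} (A : 'M[C]_n) : Prop :=
  hermitian A /\ forall v : 'cV[C]_n, 0 <= (adjmx v *m A *m v) 0 0.

Definition density {n} (A : 'M[C]_n) : Prop := psd A /\ \tr A = 1.

(* partial traces on C^m (x) C^n (Kronecker ordering of mxtens) *)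
Definition ptrace2 {m n} (X : 'M[C]_(m * n)) : 'M[C]_m :=
  \matrix_(i, j) \sum_(a < n) X (mxtens_index (i, a)) (mxtens_index (j, a)).
Definition ptrace1 {m n} (X : 'M[C]_(m * n)) : 'M[C]_n :=
  \matrix_(a, b) \sum_(i < m) X (mxtens_index (i, a)) (mxtens_index (i, b)).

(* (id_k (x) Phi) applied to X on C^k (x) C^n, for a linear map Phi *)
Definition ampliate {k n} (Phi : 'M[C]_n -> 'M[C]_n) (X : 'M[C]_(k * n))
  : 'M[C]_(k * n) :=
  \matrix_(p, q)
    Phi (\matrix_(a, b) X (mxtens_index ((mxtens_unindex p).1, a))
                          (mxtens_index ((mxtens_unindex q).1, b)))
        (mxtens_unindex p).2 (mxtens_unindex q).2.

Definition channel {n} (Phi : 'M[C]_n -> 'M[C]_n) : Prop :=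
  [/\ (forall (a : C) (X Y : 'M[C]_n), Phi (a *: X + Y) = a *: Phi X + Phi Y),
      (forall k (X : 'M[C]_(k * n)), psd X -> psd (ampliate Phi X)) &
      (forall X : 'M[C]_n, \tr (Phi X) = \tr X)].

Definition states_set := forall n, 'M[C]_n -> Prop.

Definition closed_tensor (S : states_set) : Prop :=
  forall m n (s1 : 'M[C]_m) (s2 : 'M[C]_n), S m s1 -> S n s2 -> S (m * n)%N (s1 *t s2).

Definition closed_perm (S : states_set) : Prop :=
  forall m n (s1 : 'M[C]_m) (s2 : 'M[C]_n), S (m * n)%N (s1 *t s2) -> S (n * m)%N (s2 *t s1).

(* f (rho, sigma) given by f n rho sigma *)
Definition locally_monotonic (S : states_set) (f : forall n, 'M[C]_n -> 'M[C]_n -> R) : Prop :=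
  forall m n (s1 : 'M[C]_m) (s2 : 'M[C]_n), S m s1 -> S n s2 ->
  forall Phi : 'M[C]_(m * n) -> 'M[C]_(m * n), channel Phi -> Phi (s1 *t s2) = s1 *t s2 ->
  forall (r1 : 'M[C]_m) (r2 : 'M[C]_n), density r1 -> density r2 ->
  f m (ptrace2 (Phi (r1 *t r2))) s1 + f n (ptrace1 (Phi (r1 *t r2))) s2
    <= f m r1 s1 + f n r2 s2.

End Quantum.

(* Local monotonicity is applied twice, each time pairing one factor [s_k] with
   the product state [s1 *t s2] and using as channel a swap of tensor factors,
   which fixes [s_k *t (s1 *t s2)].  Swapping the first two factors of
   [s1 *t r12] gives
     f(r1, s1) + f(s1 *t r2, s1 *t s2) <= f(s1, s1) + f(r12, s1 *t s2),
   and swapping the outer factors of [s2 *t (s1 *t r2)] gives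
     f(r2, s2) + f(s1 *t s2, s1 *t s2) <= f(s2, s2) + f(s1 *t r2, s1 *t s2);
   their sum is the claim.  That partial traces, tensor products and
   compressions preserve positivity follows by writing positive semidefinite
   matrices as Gram matrices [L^* L] (spectral theorem). *)

From Pilot Require Import Defs.
From HB Require Import structures.
From mathcomp Require Import all_boot all_order all_algebra.
From mathcomp Require Import complex mxtens spectral.
From mathcomp Require Import lra.
Import Order.TTheory GRing.Theory Num.Theory.
Local Open Scope ring_scope.
Set Implicit Arguments. Unset Strict Implicit.

Lemma big_mxtens_index (V : nmodType) m n (F : 'I_(m * n) -> V) :
  \sum_p F p = \sum_i \sum_j F (mxtens_index (i, j)).
Proof.
rewrite pair_big (reindex (@mxtens_index m n)) /=; last first.
  by exists (@mxtens_unindex m n) => p _; rewrite ?mxtens_indexK ?mxtens_unindexK.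
by apply: eq_bigr => -[i j].
Qed.

Lemma mxtrace_tens (K : comPzRingType) m n (A : 'M[K]_m) (B : 'M[K]_n) :
  \tr (A *t B) = \tr A * \tr B.
Proof.
rewrite /mxtrace big_mxtens_index mulr_suml; apply: eq_bigr => i _.
by rewrite mulr_sumr; apply: eq_bigr => j _; rewrite tensmxE.
Qed.

Section Positivity.
Variable R : rcfType.
Local Notation C := (R[i]).

Lemma adjmxE m n (A : 'M[C]_(m, n)) : adjmx A = map_mx Num.conj A^T.
Proof. by apply/matrixP => i j; rewrite !mxE. Qed.

Lemma adjmxK m n (A : 'M[C]_(m, n)) : adjmx (adjmx A) = A.
Proof. by apply/matrixP => i j; rewrite !mxE conjCK. Qed.

Lemma adjmxM m n p (A : 'M[C]_(m, n)) (B : 'M[C]_(n, p)) :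
  adjmx (A *m B) = adjmx B *m adjmx A.
Proof. by rewrite !adjmxE trmx_mul map_mxM. Qed.

Lemma adjmx_tens m n p q (A : 'M[C]_(m, n)) (B : 'M[C]_(p, q)) :
  adjmx (A *t B) = adjmx A *t adjmx B.
Proof. by rewrite !adjmxE trmx_tens map_mxT. Qed.

Lemma psd_gram k n (L : 'M[C]_(k, n)) : psd (adjmx L *m L).
Proof.
split; first by rewrite /Defs.hermitian adjmxM adjmxK.
move=> v; rewrite mulmxA -adjmxM -mulmxA mxE.
by apply: sumr_ge0 => i _; rewrite mxE -normCKC exprn_ge0.
Qed.

Lemma psd_gram_decomp n (A : 'M[C]_n) : psd A -> exists L : 'M[C]_n, A = adjmx L *m L.
Proof.
move=> [hA pA].
have nA : A \is normalmx by apply/normalmxP; rewrite -adjmxE hA.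
set P := spectralmx A; set d := spectral_diag A.
have PU : P \is unitarymx := spectral_unitarymx A.
have EA : A = adjmx P *m diag_mx d *m P.
  by rewrite adjmxE -invmx_unitary //; apply/orthomx_spectralP.
have d_ge0 t : 0 <= d 0 t.
  have -> : d 0 t = (P *m A *m adjmx P) t t.
    by rewrite EA adjmxE !mulmxA (unitarymxP PU) mul1mx mulmxtVK // mxE eqxx mulr1n.
  have := pA (adjmx (row t P)); rewrite adjmxK -row_mul !mxE.
  by congr (0 <= _); apply: eq_bigr => j _; rewrite !mxE.
pose e := \row_t sqrtC (d 0 t).
have adj_e : adjmx (diag_mx e) = diag_mx e.
  apply/matrixP => i j; rewrite !mxE eq_sym; case: eqP => [->|_]; last by rewrite !mulr0n conjC0.
  by rewrite !mulr1n geC0_conj // sqrtC_ge0.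
have ee : diag_mx e *m diag_mx e = diag_mx d.
  by rewrite mulmx_diag; congr diag_mx; apply/rowP => t; rewrite !mxE -expr2 sqrtCK.
exists (diag_mx e *m P).
by rewrite adjmxM adj_e mulmxA -(mulmxA (adjmx P)) ee.
Qed.

Lemma psd_conjugate k n (X : 'M[C]_n) (V : 'M[C]_(n, k)) :
  psd X -> psd (adjmx V *m X *m V).
Proof.
move=> /psd_gram_decomp [L ->].
by rewrite mulmxA -adjmxM -mulmxA; apply: psd_gram.
Qed.

Lemma psd_tens m n (A : 'M[C]_m) (B : 'M[C]_n) : psd A -> psd B -> psd (A *t B).
Proof.
move=> /psd_gram_decomp [L ->] /psd_gram_decomp [M ->].
by rewrite -tensmx_mul -adjmx_tens; apply: psd_gram.
Qed.

Lemma psd_sum n k (Y : 'I_k -> 'M[C]_n) : (forall a, psd (Y a)) -> psd (\sum_a Y a).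
Proof.
move=> pY; split.
  apply/matrixP => i j; rewrite !mxE !summxE rmorph_sum.
  by apply: eq_bigr => a _; case: (pY a) => /matrixP/(_ i j) + _; rewrite mxE.
move=> v; rewrite mulmx_sumr mulmx_suml summxE.
by apply: sumr_ge0 => a _; case: (pY a) => _; apply.
Qed.

Lemma mxsub_conjugateE k n (g : 'I_k -> 'I_n) (X : 'M[C]_n) :
  mxsub g g X = adjmx (colsub g 1%:M) *m X *m colsub g 1%:M.
Proof.
have -> : adjmx (colsub g 1%:M) = rowsub g (1%:M : 'M[C]_n).
  by apply/matrixP => i j; rewrite !mxE eq_sym conjC_nat.
by rewrite -mulmxA mulmx_colsub mulmx1 -rowsubE -mxsubrc.
Qed.

Lemma psd_mxsub k n (g : 'I_k -> 'I_n) (X : 'M[C]_n) : psd X -> psd (mxsub g g X).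
Proof. by rewrite mxsub_conjugateE; apply: psd_conjugate. Qed.

End Positivity.

Section PartialTrace.
Variable R : rcfType.
Local Notation C := (R[i]).
Variables m n : nat.
Implicit Type X : 'M[C]_(m * n).

Lemma ptrace2E X :
  ptrace2 X = \sum_a mxsub (fun i => mxtens_index (i, a)) (fun i => mxtens_index (i, a)) X.
Proof. by apply/matrixP => i j; rewrite !mxE summxE; apply: eq_bigr => a _; rewrite mxE. Qed.

Lemma ptrace1E X :
  ptrace1 X = \sum_i mxsub (fun a => mxtens_index (i, a)) (fun a => mxtens_index (i, a)) X.
Proof. by apply/matrixP => a b; rewrite !mxE summxE; apply: eq_bigr => i _; rewrite mxE. Qed.

Lemma mxtrace_ptrace2 X : \tr (ptrace2 X) = \tr X.
Proof. by rewrite [RHS]big_mxtens_index; apply: eq_bigr => i _; rewrite mxE. Qed.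

Lemma mxtrace_ptrace1 X : \tr (ptrace1 X) = \tr X.
Proof.
by rewrite [RHS]big_mxtens_index exchange_big; apply: eq_bigr => a _; rewrite mxE.
Qed.

Lemma density_ptrace2 X : density X -> density (ptrace2 X).
Proof.
move=> [pX tX]; split; last by rewrite mxtrace_ptrace2.
by rewrite ptrace2E; apply: psd_sum => a; apply: psd_mxsub.
Qed.

Lemma density_ptrace1 X : density X -> density (ptrace1 X).
Proof.
move=> [pX tX]; split; last by rewrite mxtrace_ptrace1.
by rewrite ptrace1E; apply: psd_sum => i; apply: psd_mxsub.
Qed.

Lemma density_tens (A : 'M[C]_m) (B : 'M[C]_n) :
  density A -> density B -> density (A *t B).
Proof.
move=> [pA tA] [pB tB]; split; first exact: psd_tens.
by rewrite mxtrace_tens tA tB mulr1.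
Qed.

End PartialTrace.

Section PermutationChannel.
Variable R : rcfType.
Local Notation C := (R[i]).

Definition mxtens_map k n (g : 'I_n -> 'I_n) (p : 'I_(k * n)) : 'I_(k * n) :=
  mxtens_index ((mxtens_unindex p).1, g (mxtens_unindex p).2).

Lemma ampliate_mxsub k n (g : 'I_n -> 'I_n) (X : 'M[C]_(k * n)) :
  ampliate (mxsub g g) X = mxsub (@mxtens_map k n g) (@mxtens_map k n g) X.
Proof. by apply/matrixP => p q; rewrite !mxE. Qed.

Lemma channel_mxsub n (g : 'I_n -> 'I_n) : injective g -> channel (mxsub g g : 'M[C]_n -> _).
Proof.
move=> g_inj; split.
- by move=> a X Y; apply/matrixP => i j; rewrite !mxE.
- move=> k X pX; rewrite ampliate_mxsub; exact: psd_mxsub.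
- by move=> X; rewrite /mxtrace [RHS](reindex_inj g_inj); apply: eq_bigr => i _; rewrite mxE.
Qed.

End PermutationChannel.

Section Swaps.
Variable R : rcfType.
Local Notation C := (R[i]).
Variables m n : nat.

Definition swap12 (p : 'I_(m * (m * n))) : 'I_(m * (m * n)) :=
  let: (a, q) := mxtens_unindex p in let: (b, c) := mxtens_unindex q in
  mxtens_index (b, mxtens_index (a, c)).

Definition swap13 (p : 'I_(n * (m * n))) : 'I_(n * (m * n)) :=
  let: (a, q) := mxtens_unindex p in let: (b, c) := mxtens_unindex q in
  mxtens_index (c, mxtens_index (b, a)).

Lemma swap12E a b c :
  swap12 (mxtens_index (a, mxtens_index (b, c))) = mxtens_index (b, mxtens_index (a, c)).
Proof. by rewrite /swap12 !mxtens_indexK. Qed.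

Lemma swap13E a b c :
  swap13 (mxtens_index (a, mxtens_index (b, c))) = mxtens_index (c, mxtens_index (b, a)).
Proof. by rewrite /swap13 !mxtens_indexK. Qed.

Lemma swap12K : involutive swap12.
Proof.
move=> p; case: (mxtens_indexP p) => a q; case: (mxtens_indexP q) => b c.
by rewrite !swap12E.
Qed.

Lemma swap13K : involutive swap13.
Proof.
move=> p; case: (mxtens_indexP p) => a q; case: (mxtens_indexP q) => b c.
by rewrite !swap13E.
Qed.

Implicit Types (A : 'M[C]_m) (B Y : 'M[C]_n).

Lemma mxsub_swap12_tens A (A' : 'M[C]_m) B :
  mxsub swap12 swap12 (A *t (A' *t B)) = A' *t (A *t B).
Proof.
apply/matrixP => p q.
case: (mxtens_indexP p) => a p'; case: (mxtens_indexP p') => b c.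
case: (mxtens_indexP q) => a' q'; case: (mxtens_indexP q') => b' c'.
by rewrite mxE !swap12E !tensmxE mulrCA.
Qed.

Lemma mxsub_swap13_tens A B (B' : 'M[C]_n) :
  mxsub swap13 swap13 (B *t (A *t B')) = B' *t (A *t B).
Proof.
apply/matrixP => p q.
case: (mxtens_indexP p) => a p'; case: (mxtens_indexP p') => b c.
case: (mxtens_indexP q) => a' q'; case: (mxtens_indexP q') => b' c'.
by rewrite mxE !swap13E !tensmxE mulrCA mulrA mulrC.
Qed.

Lemma ptrace2_swap12 A (X : 'M[C]_(m * n)) :
  ptrace2 (mxsub swap12 swap12 (A *t X)) = \tr A *: ptrace2 X.
Proof.
apply/matrixP => a a'; rewrite !mxE big_mxtens_index mulr_suml.
apply: eq_bigr => b _; rewrite mulr_sumr; apply: eq_bigr => c _.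
by rewrite mxE !swap12E tensmxE.
Qed.

Lemma ptrace1_swap12 A (X : 'M[C]_(m * n)) :
  ptrace1 (mxsub swap12 swap12 (A *t X)) = A *t ptrace1 X.
Proof.
apply/matrixP => p q.
case: (mxtens_indexP p) => b c; case: (mxtens_indexP q) => b' c'.
rewrite tensmxE !mxE mulr_sumr; apply: eq_bigr => a _.
by rewrite mxE !swap12E tensmxE.
Qed.

Lemma ptrace2_swap13 A B Y :
  ptrace2 (mxsub swap13 swap13 (B *t (A *t Y))) = (\tr A * \tr B) *: Y.
Proof.
apply/matrixP => a a'; rewrite !mxE big_mxtens_index !mulr_suml.
apply: eq_bigr => b _; rewrite !mulr_sumr mulr_suml; apply: eq_bigr => c _.
by rewrite mxE !swap13E !tensmxE mulrCA mulrA.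
Qed.

Lemma ptrace1_swap13 A B Y :
  ptrace1 (mxsub swap13 swap13 (B *t (A *t Y))) = \tr Y *: (A *t B).
Proof.
apply/matrixP => p q.
case: (mxtens_indexP p) => b c; case: (mxtens_indexP q) => b' c'.
rewrite [RHS]mxE tensmxE [LHS]mxE mulr_suml; apply: eq_bigr => a _.
by rewrite mxE !swap13E !tensmxE mulrCA [RHS]mulrC mulrA.
Qed.

End Swaps.

Section LocalMonotonicity.
Variables (R : rcfType) (S : states_set R).
Variable f : forall n, 'M[R[i]]_n -> 'M[R[i]]_n -> R.
Arguments S : clear implicits.
Arguments f : clear implicits.
Hypothesis S_density : forall n (s : 'M[R[i]]_n), S n s -> density s.
Hypothesis S_tens : closed_tensor S.
Hypothesis f_mono : locally_monotonic S f.
Variables (m n : nat) (s1 : 'M[R[i]]_m) (s2 : 'M[R[i]]_n).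
Hypotheses (S_s1 : S m s1) (S_s2 : S n s2).

Lemma locally_monotonic_swap12 (r : 'M[R[i]]_(m * n)) : density r ->
  f m (ptrace2 r) s1 + f (m * n)%N (s1 *t ptrace1 r) (s1 *t s2)
    <= f m s1 s1 + f (m * n)%N r (s1 *t s2).
Proof.
move=> dr; have [_ tr_s1] := S_density S_s1.
have := f_mono S_s1 (S_tens S_s1 S_s2) (channel_mxsub R (inv_inj (@swap12K m n)))
  (mxsub_swap12_tens s1 s1 s2) (S_density S_s1) dr.
by rewrite ptrace2_swap12 ptrace1_swap12 tr_s1 scale1r.
Qed.

Lemma locally_monotonic_swap13 (r : 'M[R[i]]_n) : density r ->
  f n r s2 + f (m * n)%N (s1 *t s2) (s1 *t s2)
    <= f n s2 s2 + f (m * n)%N (s1 *t r) (s1 *t s2).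
Proof.
move=> dr; have [_ tr_s1] := S_density S_s1; have [_ tr_s2] := S_density S_s2.
have := f_mono S_s2 (S_tens S_s1 S_s2) (channel_mxsub R (inv_inj (@swap13K m n)))
  (mxsub_swap13_tens s1 s2 s2) (S_density S_s2) (density_tens (S_density S_s1) dr).
by rewrite ptrace2_swap13 ptrace1_swap13 tr_s1 tr_s2 dr.2 mulr1 !scale1r.
Qed.

End LocalMonotonicity.

Theorem lemma37 (R : rcfType) (S : states_set R)
  (f : forall n, 'M[R[i]]_n -> 'M[R[i]]_n -> R)
  (HS : forall n (s : 'M[R[i]]_n), S n s -> density s)
  (Htens : closed_tensor S) (Hperm : closed_perm S)
  (Hmon : locally_monotonic S f) :
  let f' := fun n (rho sigma : 'M[R[i]]_n) => f n rho sigma - f n sigma sigma in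
  forall m n (s1 : 'M[R[i]]_m) (s2 : 'M[R[i]]_n), S m s1 -> S n s2 ->
  forall r12 : 'M[R[i]]_(m * n), density r12 ->
  f' m (ptrace2 r12) s1 + f' n (ptrace1 r12) s2 <= f' (m * n)%N r12 (s1 *t s2).
Proof.
move=> f' m n s1 s2 S_s1 S_s2 r12 dr12.
have := locally_monotonic_swap12 HS Htens Hmon S_s1 S_s2 dr12.
have := locally_monotonic_swap13 HS Htens Hmon S_s1 S_s2 (density_ptrace1 dr12).
rewrite /f'; lra.
Qed.
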